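(* For integers $0\leq k\leq a<b$, the following identity of rational functions in $q$ holds: $$\frac1{\binom{a+k}{k}_q}-\frac1{\binom{b+k}{k}_q}=\sum_{i=1}^kq^{a+i}\frac{1-q^{b-a}}{1-q^{b+i}}\prod_{j=i}^k\frac{1-q^j}{1-q^{a+j}}\prod_{j=1}^{i-1}\frac{1-q^j}{1-q^{b+j}}.$$
   Context: For nonnegative integers $n$, $[n]!_q=\prod_{j=1}^n\frac{1-q^j}{1-q}$ (with $[0]!_q=1$), and for integers $0\le k\le n$, $\binom{n}{k}_q=\frac{[n]!_q}{[k]!_q[n-k]!_q}$. Empty products equal $1$ and empty sums equal $0$. *)

From HB Require Import structures.
From mathcomp Require Import all_boot all_order all_algebra fraction.
Set Implicit Arguments. Unset Strict Implicit. Unset Printing Implicit Defensive.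
Import Order.TTheory GRing.Theory Num.Theory.
Local Open Scope ring_scope.

Definition qfact (F : fieldType) (q : F) (n : nat) : F :=
  \prod_(1 <= j < n.+1) ((1 - q ^+ j) / (1 - q)).

Definition qbinom (F : fieldType) (q : F) (n k : nat) : F :=
  qfact q n / (qfact q k * qfact q (n - k)).

Definition ratfun := {fraction {poly rat}}.
Definition qvar : ratfun := FracField.tofrac ('X : {poly rat}).

From HB Require Import structures.
From mathcomp Require Import all_boot all_order all_algebra fraction.
From mathcomp Require Import ring zify.
Import GRing.Theory.
Local Open Scope ring_scope.

(* The inverse of [a+k choose k]_q is the product of the ratios
   (1 - q^j)/(1 - q^(a+j)) for 1 <= j <= k.  Replacing, one index at a time
   from the left, the ratio for a by the ratio for b turns the product for a
   into the product for b, and the change at step i is exactly the i-th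
   summand, so the right-hand side telescopes.  The identity holds over any
   field in which q is not a root of unity. *)

Lemma prodf_nat_neq0 (R : idomainType) (m n : nat) (f : nat -> R) :
  (forall i, (m <= i < n)%N -> f i != 0) -> \prod_(m <= i < n) f i != 0.
Proof.
move=> f_neq0; rewrite prodf_seq_neq0; apply/allP => i.
by rewrite mem_index_iota => /f_neq0.
Qed.

Lemma one_sub_div_diff (F : fieldType) (x y z : F) :
  1 - y != 0 -> 1 - y * z != 0 ->
  (1 - x) / (1 - y) - (1 - x) / (1 - y * z) =
  y * ((1 - z) / (1 - y * z)) * ((1 - x) / (1 - y)).
Proof. by move=> y_neq1 yz_neq1; field; rewrite y_neq1 yz_neq1. Qed.

Section QBinomialInverse.
Variables (F : fieldType) (q : F).
Hypothesis qX_neq1 : forall n, (0 < n)%N -> 1 - q ^+ n != 0.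

Definition qratio (c j : nat) : F := (1 - q ^+ j) / (1 - q ^+ (c + j)).

Definition qratio_mix (a b k i : nat) : F :=
  \prod_(i <= j < k.+1) qratio a j * \prod_(1 <= j < i) qratio b j.

Lemma qfact_addn (a k : nat) :
  qfact q (a + k) =
  qfact q a * \prod_(1 <= j < k.+1) ((1 - q ^+ (a + j)) / (1 - q)).
Proof.
elim: k => [|k IHk]; first by rewrite addn0 big_geq // mulr1.
rewrite {1}/qfact addnS big_nat_recr //= -/(qfact q (a + k)) IHk.
by rewrite [in RHS]big_nat_recr //= addnS !mulrA.
Qed.

Lemma one_sub_q_neq0 : 1 - q != 0.
Proof. by have := qX_neq1 1 isT; rewrite expr1. Qed.

Lemma qfact_neq0 (n : nat) : qfact q n != 0.
Proof.
apply: prodf_nat_neq0 => j /andP [j_gt0 _].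
by rewrite mulf_neq0 ?invr_neq0 ?qX_neq1 ?one_sub_q_neq0.
Qed.

Lemma qbinom_addn_inv (a k : nat) :
  (qbinom q (a + k) k)^-1 = \prod_(1 <= j < k.+1) qratio a j.
Proof.
have q1 := one_sub_q_neq0.
have qaX_neq1 j : (0 < j)%N -> 1 - q ^+ (a + j) != 0.
  by move=> j_gt0; apply: qX_neq1; rewrite addn_gt0 j_gt0 orbT.
set D := \prod_(1 <= j < k.+1) ((1 - q ^+ (a + j)) / (1 - q)).
have D_neq0 : D != 0.
  apply: prodf_nat_neq0 => j /andP [j_gt0 _].
  by rewrite mulf_neq0 ?invr_neq0 ?qaX_neq1.
have qratioE j : (1 <= j < k.+1)%N ->
    qratio a j = ((1 - q ^+ j) / (1 - q)) / ((1 - q ^+ (a + j)) / (1 - q)).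
  by move=> /andP [j_gt0 _]; rewrite /qratio; field; rewrite q1 qaX_neq1.
rewrite (eq_big_nat _ _ qratioE) prodf_div -/(qfact q k) -/D.
rewrite /qbinom addnK qfact_addn -/D.
by field; rewrite qfact_neq0 qfact_neq0 D_neq0.
Qed.

Lemma qratio_mix_step (a b k i : nat) : (a <= b)%N -> (0 < i <= k)%N ->
  qratio_mix a b k i - qratio_mix a b k i.+1 =
  q ^+ (a + i) * ((1 - q ^+ (b - a)) / (1 - q ^+ (b + i)))
  * \prod_(i <= j < k.+1) qratio a j * \prod_(1 <= j < i) qratio b j.
Proof.
move=> le_ab /andP [i_gt0 le_ik].
have qbE : q ^+ (b + i) = q ^+ (a + i) * q ^+ (b - a).
  by rewrite -exprD; congr (_ ^+ _); lia.
have qratio_diff : qratio a i - qratio b i =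
    q ^+ (a + i) * ((1 - q ^+ (b - a)) / (1 - q ^+ (b + i))) * qratio a i.
  have [qa_neq1 qb_neq1] : 1 - q ^+ (a + i) != 0 /\ 1 - q ^+ (b + i) != 0.
    by split; apply: qX_neq1; rewrite addn_gt0 i_gt0 orbT.
  by rewrite /qratio qbE one_sub_div_diff // -qbE.
rewrite /qratio_mix big_ltn // (big_nat_recr i) //=.
by rewrite -mulrA [qratio a i * _]mulrC mulrA -mulrBr qratio_diff; ring.
Qed.

Lemma qbinom_inv_diff (k a b : nat) : (a <= b)%N ->
  (qbinom q (a + k) k)^-1 - (qbinom q (b + k) k)^-1 =
  \sum_(1 <= i < k.+1)
     (q ^+ (a + i) * ((1 - q ^+ (b - a)) / (1 - q ^+ (b + i)))
      * \prod_(i <= j < k.+1) qratio a j * \prod_(1 <= j < i) qratio b j).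
Proof.
move=> le_ab.
have -> : (qbinom q (a + k) k)^-1 = qratio_mix a b k 1.
  by rewrite qbinom_addn_inv /qratio_mix [X in _ = _ * X]big_geq ?mulr1.
have -> : (qbinom q (b + k) k)^-1 = qratio_mix a b k k.+1.
  by rewrite qbinom_addn_inv /qratio_mix [X in _ = X * _]big_geq ?mul1r.
rewrite (telescope_sumr_eq (fun i => - qratio_mix a b k i)) //.
  by rewrite opprK addrC.
by move=> i /andP [i_gt0 lt_ik]; rewrite opprK [RHS]addrC qratio_mix_step ?i_gt0.
Qed.

End QBinomialInverse.

Lemma one_sub_qvarX_neq0 (n : nat) : (0 < n)%N -> 1 - qvar ^+ n != 0.
Proof.
move=> n_gt0.
rewrite /qvar -tofracXn -tofrac1 -tofracB tofrac_eq0.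
apply: contraTneq n_gt0 => /(congr1 (horner^~ 0)).
by rewrite !hornerE expr0n; case: n => // n; rewrite subr0 => /eqP; rewrite oner_eq0.
Qed.

Theorem lemma8 (k a b : nat) (hka : (k <= a)%N) (hab : (a < b)%N) :
  let q := qvar in
  (qbinom q (a + k) k)^-1 - (qbinom q (b + k) k)^-1 =
  \sum_(1 <= i < k.+1)
     (q ^+ (a + i) * ((1 - q ^+ (b - a)) / (1 - q ^+ (b + i)))
      * (\prod_(i <= j < k.+1) ((1 - q ^+ j) / (1 - q ^+ (a + j))))
      * (\prod_(1 <= j < i) ((1 - q ^+ j) / (1 - q ^+ (b + j))))).
Proof. exact: qbinom_inv_diff one_sub_qvarX_neq0 k a b (ltnW hab). Qed.
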